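(* Consider the sensor-network Kalman filtering model of the context with a single sensor ($M=1$, so $S_1$ transmits directly to the gateway $S_0$ and $C(k)=\gamma_1(k)C_1$) and a time-invariant system matrix $A(k)=A$ for all $k$. Suppose the network state process $\{\Xi(k)\}$ is a time-homogeneous Markov chain with transition probabilities $p_{ij}$, $i,j\in\mathbb{B}$, the power and bit-rate control laws are of the form $u_1(k)=\kappa_1(\Xi(k),h_1(k))$, $b_1(k)=\eta_1(\Xi(k),h_1(k))$, and $C_1$ has full column rank. If there exists $\rho\in[0,1)$ such that $$\|A\|^2\sum_{j\in\mathbb{B}}p_{ij}(1-\phi_{1|j})\le\rho\quad\text{for all }i\in\mathbb{B},$$ then the Kalman filter is exponentially bounded.
   Context: System: $x(k+1)=Ax(k)+w(k)$, $k\in\mathbb{N}_0$, $x(k)\in\mathbb{R}^n$, $x(0)\sim\mathcal N(x_0,P_0)$, $\{w(k)\}$ independent with $w(k)\sim\mathcal N(0,Q(k))$; one sensor $y_1(k)=C_1x(k)+v_1(k)$, $C_1\in\mathbb{R}^{l_1\times n}$, $\{v_1(k)\}$ independent with $v_1(k)\sim\mathcal N(0,R_1(k))$; $x(0),w,v_1$ mutually independent; $\{Q(k)\},\{R_1(k)\}$ deterministic, bounded, known. $\|\cdot\|$ is the spectral norm. Fading model: network state $\Xi(k)\in\mathbb{B}=\{1,\dots,|\mathbb{B}|\}$ (finite); channel power gain $h_1(k)\ge0$ with time-homogeneous conditional distribution given the network state, gains at different times conditionally independent given the network states. The link success indicator $\gamma_1(k)\in\{0,1\}$ ($1$ iff the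 packet from $S_1$ reaches the gateway at time $k$) satisfies $\Pr\{\gamma_1(k)=1\mid h_1(k)=h,u_1(k)=u,b_1(k)=b\}=f_1(hu,b)$ with $u_1$ the transmit power, $b_1$ the bit-rate, $f_1$ increasing in the first and decreasing in the second argument. Conditioned on the network states the $\gamma_1(k)$ are independent over time, and $\phi_{1|j}=\Pr\{\gamma_1(k)=1\mid\Xi(k)=j\}$ does not depend on $k$; the network and dropout processes are independent of $x(0),w,v_1$. Kalman filter: $P(k+1|k)=AP(k|k-1)A^T+Q(k)-K(k)C_1P(k|k-1)A^T$, $K(k)=\gamma_1(k)AP(k|k-1)C_1^T(C_1P(k|k-1)C_1^T+R_1(k))^{-1}$, $P(0|-1)=P_0$ (with the corresponding state-estimate recursion). The filter is exponentially bounded if there exist finite $\alpha,\beta$ and $\rho'\in[0,1)$ with $\mathbf{E}\{\operatorname{tr}P(k|k-1)\}\le\alpha\rho'^k+\beta$ for all $k\in\mathbb{N}_0$. *)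

From HB Require Import structures.
From mathcomp Require Import all_boot all_order all_algebra.
From mathcomp Require Import boolp classical_sets reals.
Set Implicit Arguments. Unset Strict Implicit. Unset Printing Implicit Defensive.
Import Order.TTheory GRing.Theory Num.Theory.
Local Open Scope ring_scope.
Local Open Scope classical_set_scope.

Section KF.
Variable R : realType.

Definition vnorm n (x : 'cV[R]_n) : R := Num.sqrt (\sum_i (x i 0) ^+ 2).

Definition specnorm m n (M : 'M[R]_(m, n)) : R :=
  sup [set vnorm (M *m x) | x in [set x : 'cV[R]_n | vnorm x <= 1]].

Definition qform n (M : 'M[R]_n) (x : 'cV[R]_n) : R := (x^T *m M *m x) 0 0.

Definition psd n (M : 'M[R]_n) : Prop := M^T = M /\ forall x, 0 <= qform M x.
Definition pd n (M : 'M[R]_n) : Prop :=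
  M^T = M /\ forall x, x != 0 -> 0 < qform M x.

(* Kalman filter prediction error covariance P(k|k-1) for a given
   realization g of the dropout indicator gamma_1 (g k = gamma_1(k)). *)
Fixpoint kf_cov n l (A : 'M[R]_n) (Q : nat -> 'M[R]_n) (C : 'M[R]_(l, n))
  (Rv : nat -> 'M[R]_l) (P0 : 'M[R]_n) (g : nat -> bool) (k : nat) : 'M[R]_n :=
  match k with
  | 0 => P0
  | k'.+1 =>
    let P := kf_cov A Q C Rv P0 g k' in
    let K := (if g k' then 1 else 0) *: (A *m P *m C^T *m invmx (C *m P *m C^T + Rv k')) in
    A *m P *m A^T + Q k' - K *m C *m P *m A^T
  end.

(* Probability that the network-state chain takes the values xs at times
   0..size xs - 1, given initial distribution pi0 and transitions p. *)
Fixpoint chain_path_w B (p : 'I_B -> 'I_B -> R) (x : 'I_B) (r : seq 'I_B) : R :=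
  match r with
  | [::] => 1
  | y :: r' => p x y * chain_path_w p y r'
  end.

Definition chain_w B (pi0 : 'I_B -> R) (p : 'I_B -> 'I_B -> R) (xs : seq 'I_B) : R :=
  match xs with
  | [::] => 1
  | x :: r => pi0 x * chain_path_w p x r
  end.

(* Conditional probability of the dropout pattern gs given network states xs:
   conditionally independent, Pr{gamma_1(t)=1 | Xi(t)=j} = phi j. *)
Definition drop_w B (phi : 'I_B -> R) k (xs : k.-tuple 'I_B) (gs : k.-tuple bool) : R :=
  \prod_(i < k) (if tnth gs i then phi (tnth xs i) else 1 - phi (tnth xs i)).

(* E{ tr P(k|k-1) }: P(k|k-1) depends only on gamma_1(0..k-1); expectation over
   the joint law of (Xi(0..k-1), gamma_1(0..k-1)). *)
Definition exp_tr_P B (pi0 : 'I_B -> R) (p : 'I_B -> 'I_B -> R) (phi : 'I_B -> R)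
  n l (A : 'M[R]_n) (Q : nat -> 'M[R]_n) (C : 'M[R]_(l, n))
  (Rv : nat -> 'M[R]_l) (P0 : 'M[R]_n) (k : nat) : R :=
  \sum_(xs : k.-tuple 'I_B) \sum_(gs : k.-tuple bool)
    chain_w pi0 p xs * drop_w phi xs gs * \tr (kf_cov A Q C Rv P0 (nth false gs) k).

Definition exp_bounded (E : nat -> R) : Prop :=
  exists (alpha beta rho' : R), 0 <= rho' < 1 /\
    forall k, E k <= alpha * rho' ^+ k + beta.

End KF.

From HB Require Import structures.
From mathcomp Require Import all_boot all_order all_algebra.
From mathcomp Require Import boolp classical_sets reals.
From mathcomp Require Import ring lra.
Import Order.TTheory GRing.Theory Num.Theory.
Local Open Scope ring_scope.
Set Implicit Arguments. Unset Strict Implicit. Unset Printing Implicit Defensive.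

(* Write P(k|k-1) <= lam_k I.  A dropped packet gives the open-loop bound
   lam_(k+1) = ||A||^2 lam_k + c.  Since C1 has a left inverse L, the Joseph form
   shows that the posterior covariance of a received measurement is dominated by
   L R1 L^T, so a successful transmission gives lam_(k+1) <= c ||A L||^2 + c
   whatever lam_k was.  Averaging this scalar recursion over the Markov chain,
   conditioned on the current network state, the hypothesis
   ||A||^2 sum_j p_ij (1 - phi_j) <= rho makes the expected bound contract by rho
   at each step; hence E lam_k, and with it E tr P(k|k-1) <= n E lam_k, is
   uniformly bounded. *)

Section EuclideanNorm.
Variable R : realType.

Definition vnorm2 n (x : 'cV[R]_n) : R := \sum_i x i 0 ^+ 2.

Lemma vnorm2_ge0 n (x : 'cV[R]_n) : 0 <= vnorm2 x.
Proof. by apply: sumr_ge0 => i _; apply: sqr_ge0. Qed.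

Lemma vnorm2E n (x : 'cV[R]_n) : vnorm2 x = (x^T *m x) 0 0.
Proof. by rewrite /vnorm2 mxE; apply: eq_bigr => i _; rewrite mxE expr2. Qed.

Lemma sqr_vnorm n (x : 'cV[R]_n) : vnorm x ^+ 2 = vnorm2 x.
Proof. by rewrite sqr_sqrtr // vnorm2_ge0. Qed.

Lemma vnorm_ge0 n (x : 'cV[R]_n) : 0 <= vnorm x.
Proof. exact: sqrtr_ge0. Qed.

Lemma vnorm2_eq0 n (x : 'cV[R]_n) : vnorm2 x = 0 -> x = 0.
Proof.
move=> /psumr_eq0P x0; apply/matrixP => i j; rewrite (ord1 j) mxE.
by apply/eqP; rewrite -sqrf_eq0 x0 // => k _; apply: sqr_ge0.
Qed.

Lemma vnorm_eq0 n (x : 'cV[R]_n) : vnorm x = 0 -> x = 0.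
Proof. by move=> x0; apply: vnorm2_eq0; rewrite -sqr_vnorm x0 expr0n. Qed.

Lemma vnorm0 n : vnorm (0 : 'cV[R]_n) = 0.
Proof. by rewrite /vnorm big1 ?sqrtr0 // => i _; rewrite mxE expr0n. Qed.

Lemma vnormZ n (t : R) (x : 'cV[R]_n) : vnorm (t *: x) = `|t| * vnorm x.
Proof.
rewrite /vnorm -sqrtr_sqr -sqrtrM ?sqr_ge0 //; congr Num.sqrt.
by rewrite mulr_sumr; apply: eq_bigr => i _; rewrite mxE exprMn.
Qed.

Lemma abs_le_vnorm n (x : 'cV[R]_n) i : `|x i 0| <= vnorm x.
Proof.
rewrite -sqrtr_sqr ler_sqrt ?vnorm2_ge0 // (bigD1 i) //= lerDl.
by apply: sumr_ge0 => j _; apply: sqr_ge0.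
Qed.

Lemma vnorm_le_sum_abs n (x : 'cV[R]_n) : vnorm x <= \sum_i `|x i 0|.
Proof.
have s0 : 0 <= \sum_i `|x i 0| by apply: sumr_ge0.
rewrite -(ger0_norm s0) -sqrtr_sqr ler_sqrt ?sqr_ge0 // expr2 mulr_suml.
apply: ler_sum => i _; rewrite -real_normK ?num_real // expr2.
by rewrite ler_wpM2l // (bigD1 i) //= lerDl; apply: sumr_ge0.
Qed.

Lemma dot_le_vnorm n (x y : 'cV[R]_n) : (x^T *m y) 0 0 <= vnorm x * vnorm y.
Proof.
have -> : (x^T *m y) 0 0 = \sum_i x i 0 * y i 0.
  by rewrite mxE; apply: eq_bigr => i _; rewrite mxE.
have [->|x0] := eqVneq x 0.
  by rewrite vnorm0 mul0r big1 // => i _; rewrite mxE mul0r.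
have [->|y0] := eqVneq y 0.
  by rewrite vnorm0 mulr0 big1 // => i _; rewrite mxE mulr0.
set a := vnorm x; set b := vnorm y.
have a_gt0 : 0 < a by rewrite lt_def vnorm_ge0 andbT; apply: contra x0 => /eqP/vnorm_eq0->.
have b_gt0 : 0 < b by rewrite lt_def vnorm_ge0 andbT; apply: contra y0 => /eqP/vnorm_eq0->.
(* expanding [0 <= sum_i (b x_i - a y_i)^2] gives [0 <= 2ab (ab - <x, y>)] *)
have : 0 <= \sum_i (x i 0 * b - y i 0 * a) ^+ 2 by apply: sumr_ge0 => i _; apply: sqr_ge0.
have -> : \sum_i (x i 0 * b - y i 0 * a) ^+ 2 =
    vnorm2 x * b ^+ 2 + vnorm2 y * a ^+ 2 - 2 * (a * b) * \sum_i x i 0 * y i 0.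
  rewrite /vnorm2 !mulr_suml mulr_sumr -big_split -sumrB /=.
  by apply: eq_bigr => i _; ring.
rewrite -!sqr_vnorm -/a -/b => h.
have ab_gt0 : 0 < 2 * (a * b) by rewrite !mulr_gt0.
by rewrite -subr_ge0 -(pmulr_rge0 _ ab_gt0); move: h; congr (_ <= _); ring.
Qed.

End EuclideanNorm.

Section SpectralNorm.
Variable R : realType.

Lemma has_sup_specnorm m n (M : 'M[R]_(m, n)) :
  has_sup [set vnorm (M *m x) | x in [set x : 'cV[R]_n | vnorm x <= 1]].
Proof.
split; first by exists (vnorm (M *m 0)), 0 => //=; rewrite vnorm0.
exists (\sum_i \sum_j `|M i j|) => _ [x /= x1 <-].
apply: le_trans (vnorm_le_sum_abs _) _; apply: ler_sum => i _.
rewrite mxE; apply: le_trans (ler_norm_sum _ _ _) _; apply: ler_sum => j _.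
by rewrite normrM ler_piMr // (le_trans (abs_le_vnorm _ _)).
Qed.

Lemma specnorm_ge0 m n (M : 'M[R]_(m, n)) : 0 <= specnorm M.
Proof.
apply: (sup_upper_bound (has_sup_specnorm M)).
by exists 0; rewrite /= ?mulmx0 vnorm0.
Qed.

Lemma vnorm_mulmx_le m n (M : 'M[R]_(m, n)) x : vnorm (M *m x) <= specnorm M * vnorm x.
Proof.
have [->|x0] := eqVneq x 0; first by rewrite mulmx0 !vnorm0 mulr0.
have x_gt0 : 0 < vnorm x.
  by rewrite lt_def vnorm_ge0 andbT; apply: contra x0 => /eqP/vnorm_eq0->.
have : vnorm (M *m ((vnorm x)^-1 *: x)) <= specnorm M.
  apply: (sup_upper_bound (has_sup_specnorm M)); exists ((vnorm x)^-1 *: x) => //=.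
  by rewrite vnormZ ger0_norm ?invr_ge0 ?vnorm_ge0 // mulVf ?gt_eqF.
rewrite -scalemxAr vnormZ ger0_norm ?invr_ge0 ?vnorm_ge0 //.
by rewrite mulrC -ler_pdivlMr ?invr_gt0 // invrK.
Qed.

Lemma vnorm_trmx_mulmx_le m n (M : 'M[R]_(m, n)) x :
  vnorm (M^T *m x) <= specnorm M * vnorm x.
Proof.
set y := M^T *m x.
have [->|y0] := eqVneq (vnorm y) 0; first by rewrite mulr_ge0 ?specnorm_ge0 ?vnorm_ge0.
have y_gt0 : 0 < vnorm y by rewrite lt_def y0 vnorm_ge0.
(* |y|^2 = <x, M y> <= |x| |M y| <= |x| ||M|| |y| *)
rewrite -(ler_pM2r y_gt0) -expr2 sqr_vnorm vnorm2E {2}/y trmx_mul trmxK -mulmxA.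
apply: le_trans (dot_le_vnorm _ _) _.
by rewrite [specnorm M * _]mulrC -mulrA ler_wpM2l ?vnorm_ge0 // vnorm_mulmx_le.
Qed.

Lemma vnorm2_trmx_mulmx_le m n (M : 'M[R]_(m, n)) x :
  vnorm2 (M^T *m x) <= specnorm M ^+ 2 * vnorm2 x.
Proof.
rewrite -!sqr_vnorm -exprMn; apply: lerXn2r; rewrite ?nnegrE ?mulr_ge0 ?vnorm_ge0 ?specnorm_ge0 //.
exact: vnorm_trmx_mulmx_le.
Qed.

End SpectralNorm.

Section QuadraticForms.
Variable R : realType.

Lemma qformD n (P P' : 'M[R]_n) x : qform (P + P') x = qform P x + qform P' x.
Proof. by rewrite /qform mulmxDr mulmxDl mxE. Qed.

Lemma qform_cong n m (X : 'M[R]_(n, m)) (P : 'M[R]_m) x :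
  qform (X *m P *m X^T) x = qform P (X^T *m x).
Proof. by rewrite /qform trmx_mul trmxK !mulmxA. Qed.

Lemma qform_delta n (P : 'M[R]_n) i : qform P (delta_mx i 0) = P i i.
Proof.
rewrite /qform trmx_delta -rowE mxE (bigD1 i) //= big1 ?addr0.
  by rewrite !mxE !eqxx mulr1.
by move=> j ji; rewrite !mxE (negbTE ji) mulr0.
Qed.

Lemma qform_le_specnorm n (P : 'M[R]_n) x : qform P x <= specnorm P * vnorm2 x.
Proof.
rewrite /qform -mulmxA; apply: le_trans (dot_le_vnorm _ _) _.
rewrite -sqr_vnorm expr2 mulrA [vnorm x * _]mulrC ler_wpM2r ?vnorm_ge0 //.
exact: vnorm_mulmx_le.
Qed.

Lemma psdD n (P P' : 'M[R]_n) : psd P -> psd P' -> psd (P + P').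
Proof.
move=> [sP P0] [sP' P'0]; split; first by rewrite linearD /= sP sP'.
by move=> x; rewrite qformD addr_ge0.
Qed.

Lemma psd_cong n m (X : 'M[R]_(n, m)) (P : 'M[R]_m) : psd P -> psd (X *m P *m X^T).
Proof.
move=> [sP P0]; split; last by move=> x; rewrite qform_cong.
by rewrite !trmx_mul trmxK sP mulmxA.
Qed.

Lemma pd_psd n (P : 'M[R]_n) : pd P -> psd P.
Proof.
move=> [sP P0]; split=> // x; have [->|x0] := eqVneq x 0; last exact: ltW (P0 _ x0).
by rewrite /qform mulmx0 mxE.
Qed.

Definition qform_ub n (P : 'M[R]_n) (lam : R) := forall x, qform P x <= lam * vnorm2 x.

Lemma qform_ub_specnorm n (P : 'M[R]_n) : qform_ub P (specnorm P).
Proof. exact: qform_le_specnorm. Qed.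

Lemma qform_ubW n (P : 'M[R]_n) lam mu : lam <= mu -> qform_ub P lam -> qform_ub P mu.
Proof. by move=> lam_mu Plam x; rewrite (le_trans (Plam x)) // ler_wpM2r ?vnorm2_ge0. Qed.

Lemma qform_ubD n (P P' : 'M[R]_n) lam lam' :
  qform_ub P lam -> qform_ub P' lam' -> qform_ub (P + P') (lam + lam').
Proof. by move=> Plam P'lam x; rewrite qformD mulrDl lerD. Qed.

Lemma qform_ub_cong n m (X : 'M[R]_(n, m)) (P : 'M[R]_m) lam :
  0 <= lam -> qform_ub P lam -> qform_ub (X *m P *m X^T) (specnorm X ^+ 2 * lam).
Proof.
move=> lam0 Plam x; rewrite qform_cong (le_trans (Plam _)) //.
by rewrite [_ ^+ 2 * lam]mulrC -mulrA ler_wpM2l // vnorm2_trmx_mulmx_le.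
Qed.

Lemma mxtrace_le_qform_ub n (P : 'M[R]_n) lam : qform_ub P lam -> \tr P <= n%:R * lam.
Proof.
move=> Plam; rewrite /mxtrace -[n in n%:R]card_ord mulr_natl -sumr_const; apply: ler_sum => i _.
have := Plam (delta_mx i 0); rewrite qform_delta.
suff -> : vnorm2 (delta_mx i 0 : 'cV[R]_n) = 1 by rewrite mulr1.
have := qform_delta (1%:M : 'M[R]_n) i.
by rewrite /qform mulmx1 -vnorm2E mxE eqxx.
Qed.

End QuadraticForms.

Section PosteriorCovariance.
Variables (R : realType) (n l : nat) (C : 'M[R]_(l, n)) (Rk : 'M[R]_l).

Definition innov_cov (P : 'M[R]_n) := C *m P *m C^T + Rk.
Definition kalman_gain (P : 'M[R]_n) := P *m C^T *m invmx (innov_cov P).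
Definition posterior_cov (P : 'M[R]_n) := P - kalman_gain P *m C *m P.

Variable P : 'M[R]_n.
Hypotheses (psdP : psd P) (pdRk : pd Rk).

Lemma innov_cov_unit : innov_cov P \in unitmx.
Proof.
have [_ Rk_pos] := pdRk; rewrite unitmxE unitfE; apply/negP => /det0P [v v0 vS].
have vT0 : v^T != 0 by apply: contra v0 => /eqP vT0; rewrite -[v]trmxK vT0 trmx0.
have : qform (innov_cov P) v^T = 0 by rewrite /qform trmxK vS mul0mx mxE.
rewrite qformD qform_cong; have := psdP.2 (C^T *m v^T); have := Rk_pos _ vT0.
lra.
Qed.

Lemma joseph_form (L : 'M[R]_(n, l)) :
  (1%:M - L *m C) *m P *m (1%:M - L *m C)^T + L *m Rk *m L^T =
  posterior_cov P + (L - kalman_gain P) *m innov_cov P *m (L - kalman_gain P)^T.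
Proof.
have [sP _] := psdP; have [sRk _] := pdRk.
set S := innov_cov P; set K := kalman_gain P.
have sS : S^T = S by rewrite /S /innov_cov linearD /= !trmx_mul trmxK sP sRk mulmxA.
have KS : K *m S = P *m C^T by rewrite /K /kalman_gain -mulmxA mulVmx ?mulmx1 ?innov_cov_unit.
have SKt : S *m K^T = C *m P.
  by rewrite -[S]sS -trmx_mul KS trmx_mul sP trmxK.
have KSKt : K *m S *m K^T = K *m C *m P by rewrite -mulmxA SKt mulmxA.
have -> : (L - K) *m S *m (L - K)^T =
    L *m S *m L^T - L *m C *m P - P *m C^T *m L^T + K *m C *m P.
  rewrite linearB /= mulmxBl !mulmxBr !mulmxBl KSKt -[L *m S *m K^T]mulmxA SKt.
  rewrite KS mulmxA.
  move: (L *m S *m L^T) (L *m C *m P) (P *m C^T *m L^T) (K *m C *m P) => X1 X2 X3 X4.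
  by apply/matrixP => i j; rewrite !mxE; lra.
rewrite /posterior_cov -/K /S /innov_cov linearB /= trmx1 trmx_mul.
rewrite !(mulmxDl, mulmxDr, mulmxBl, mulmxBr, mulNmx, mulmxN, mul1mx, mulmx1) !mulmxA.
move: (P *m C^T *m L^T) (L *m C *m P) (L *m C *m P *m C^T *m L^T) (L *m Rk *m L^T)
   (K *m C *m P) => X1 X2 X3 X4 X5.
by apply/matrixP => i j; rewrite !mxE; lra.
Qed.

Lemma psd_posterior_cov : psd (posterior_cov P).
Proof.
have := joseph_form (kalman_gain P); rewrite subrr mul0mx mul0mx addr0 => <-.
by apply: psdD; apply: psd_cong => //; apply: pd_psd.
Qed.

Lemma qform_posterior_cov_le (L : 'M[R]_(n, l)) : L *m C = 1%:M ->
  forall y, qform (posterior_cov P) y <= qform Rk (L^T *m y).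
Proof.
move=> LC y; rewrite -qform_cong.
have := joseph_form L; rewrite LC subrr mul0mx mul0mx add0r => ->.
rewrite qformD lerDl; apply: (psd_cong _ _).2.
by apply: psdD; [apply: psd_cong | apply: pd_psd].
Qed.

End PosteriorCovariance.

Section RiccatiBound.
Variables (R : realType) (n l : nat) (A Q : 'M[R]_n) (C : 'M[R]_(l, n)) (Rk : 'M[R]_l).
Variables (P : 'M[R]_n) (c : R).
Hypotheses (psdP : psd P) (psdQ : psd Q) (Qc : specnorm Q <= c).

Lemma riccati_open_bound lam : 0 <= lam -> qform_ub P lam ->
  psd (A *m P *m A^T + Q) /\ qform_ub (A *m P *m A^T + Q) (specnorm A ^+ 2 * lam + c).
Proof.
move=> lam0 Plam; split; first by apply: psdD => //; apply: psd_cong.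
apply: qform_ubD; first exact: qform_ub_cong.
exact: qform_ubW Qc (qform_ub_specnorm _).
Qed.

Lemma riccati_closed_bound (L : 'M[R]_(n, l)) : pd Rk -> specnorm Rk <= c -> L *m C = 1%:M ->
  let P' := A *m posterior_cov C Rk P *m A^T + Q in
  psd P' /\ qform_ub P' (c * specnorm (A *m L) ^+ 2 + c).
Proof.
move=> pdRk Rkc LC; split; first by apply: psdD => //; apply/psd_cong/psd_posterior_cov.
apply: qform_ubD; last exact: qform_ubW Qc (qform_ub_specnorm _).
move=> x; rewrite qform_cong (le_trans (qform_posterior_cov_le psdP pdRk LC _)) //.
rewrite mulmxA -trmx_mul -mulrA.
apply: le_trans (qform_le_specnorm _ _) _; apply: ler_pM => //.
- exact: specnorm_ge0.
- exact: vnorm2_ge0.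
- exact: vnorm2_trmx_mulmx_le.
Qed.

End RiccatiBound.

Definition scons (b : bool) (gamma : nat -> bool) : nat -> bool :=
  fun t => if t is t'.+1 then gamma t' else b.

Section ScalarBound.
Variable R : realType.

Definition bound_step (a b : R) (gamma : bool) (v : R) : R := (if gamma then 0 else a * v) + b.

Fixpoint bound_seq (a b v : R) (gamma : nat -> bool) (k : nat) : R :=
  if k is k'.+1 then bound_step a b (gamma k') (bound_seq a b v gamma k') else v.

Lemma bound_step_ge0 a b gamma v : 0 <= a -> 0 <= b -> 0 <= v -> 0 <= bound_step a b gamma v.
Proof. by move=> a0 b0 v0; rewrite addr_ge0 //; case: gamma; rewrite ?mulr_ge0. Qed.

Lemma bound_seq_ge0 a b v gamma k : 0 <= a -> 0 <= b -> 0 <= v -> 0 <= bound_seq a b v gamma k.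
Proof. by move=> a0 b0 v0; elim: k => //= k IHk; apply: bound_step_ge0. Qed.

Lemma bound_seq_scons a b v beta gamma k :
  bound_seq a b v (scons beta gamma) k.+1 = bound_seq a b (bound_step a b beta v) gamma k.
Proof. by elim: k => //= k ->. Qed.

End ScalarBound.

Section CovarianceBound.
Variables (R : realType) (n l : nat) (A : 'M[R]_n) (C : 'M[R]_(l, n)).
Variables (Q : nat -> 'M[R]_n) (Rv : nat -> 'M[R]_l) (P0 : 'M[R]_n).
Variables (L : 'M[R]_(n, l)) (c : R).
Hypotheses (psdP0 : psd P0) (psdQ : forall k, psd (Q k)) (pdRv : forall k, pd (Rv k)).
Hypotheses (Qc : forall k, specnorm (Q k) <= c) (Rvc : forall k, specnorm (Rv k) <= c).
Hypothesis LC : L *m C = 1%:M.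

Lemma kf_covS gamma k : let P := kf_cov A Q C Rv P0 gamma k in
  kf_cov A Q C Rv P0 gamma k.+1 =
  if gamma k then A *m posterior_cov C (Rv k) P *m A^T + Q k else A *m P *m A^T + Q k.
Proof.
rewrite /=; case: (gamma k); last by rewrite scale0r !mul0mx subr0.
by rewrite scale1r /posterior_cov /kalman_gain /innov_cov mulmxBr mulmxBl !mulmxA addrAC.
Qed.

Lemma kf_cov_bound gamma k :
  let P := kf_cov A Q C Rv P0 gamma k in
  psd P /\
  qform_ub P (bound_seq (specnorm A ^+ 2) (c * specnorm (A *m L) ^+ 2 + c) (specnorm P0) gamma k).
Proof.
have c0 : 0 <= c := le_trans (specnorm_ge0 _) (Qc 0).
elim: k => [|k [psdP Plam]]; first by split => //; apply: qform_ub_specnorm.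
rewrite kf_covS /=; case: (gamma k).
  by rewrite /bound_step add0r; apply: riccati_closed_bound.
have lam0 : 0 <= bound_seq (specnorm A ^+ 2) (c * specnorm (A *m L) ^+ 2 + c) (specnorm P0) gamma k.
  by apply: bound_seq_ge0; rewrite ?sqr_ge0 ?addr_ge0 ?mulr_ge0 ?specnorm_ge0.
have [psdP' P'lam] := riccati_open_bound A psdP (psdQ k) (Qc k) lam0 Plam.
split => //; apply: qform_ubW P'lam.
by rewrite lerD2l lerDr mulr_ge0 ?sqr_ge0.
Qed.

End CovarianceBound.

Lemma big_tuple_cons (V : nmodType) (T : finType) k (F : k.+1.-tuple T -> V) :
  \sum_(t : k.+1.-tuple T) F t = \sum_(x : T) \sum_(t : k.-tuple T) F [tuple of x :: t].
Proof.
rewrite (reindex (fun xt : T * k.-tuple T => [tuple of xt.1 :: xt.2])) /=.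
  by rewrite pair_big.
exists (fun t : k.+1.-tuple T => (thead t, [tuple of behead t])) => [[x t]|t] _ /=.
  by rewrite theadE; congr pair; apply: val_inj.
by rewrite -tuple_eta.
Qed.

Lemma big_tuple0 (V : nmodType) (T : finType) (F : 0.-tuple T -> V) :
  \sum_(t : 0.-tuple T) F t = F [tuple].
Proof. by rewrite (big_pred1 [tuple]) // => t; apply/esym/eqP/tuple0. Qed.

Section PathMean.
Variables (R : realType) (B : nat) (p : 'I_B -> 'I_B -> R) (phi : 'I_B -> R).

Definition path_mean (mu : 'I_B -> R) k (F : (nat -> bool) -> R) : R :=
  \sum_(xs : k.-tuple 'I_B) \sum_(gs : k.-tuple bool)
    chain_w mu p xs * drop_w phi xs gs * F (nth false gs).

Lemma path_mean0 mu F : path_mean mu 0 F = F (fun _ => false).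
Proof.
rewrite /path_mean !big_tuple0 /drop_w big_ord0 /= !mul1r.
by congr F; apply/funext => t; rewrite nth_nil.
Qed.

Lemma drop_w_cons k x (xs : k.-tuple 'I_B) b (gs : k.-tuple bool) :
  drop_w phi [tuple of x :: xs] [tuple of b :: gs] =
  (if b then phi x else 1 - phi x) * drop_w phi xs gs.
Proof.
rewrite /drop_w big_ord_recl !tnth0; congr (_ * _).
by apply: eq_bigr => i _; rewrite !tnthS.
Qed.

Lemma path_meanS mu k F : path_mean mu k.+1 F =
  \sum_x mu x * \sum_(b : bool) (if b then phi x else 1 - phi x) *
    path_mean (p x) k (fun gamma => F (scons b gamma)).
Proof.
rewrite /path_mean big_tuple_cons; apply: eq_bigr => x _.
under eq_bigr do rewrite big_tuple_cons.
rewrite exchange_big mulr_sumr; apply: eq_bigr => b _.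
rewrite mulrA mulr_sumr; apply: eq_bigr => xs _.
rewrite !mulr_sumr; apply: eq_bigr => gs _.
rewrite drop_w_cons /=.
have -> : chain_path_w p x xs = chain_w (p x) p xs by case: xs => -[].
have -> : nth false (b :: gs) = scons b (nth false gs) by apply/funext => -[].
ring.
Qed.

Lemma path_meanZl mu k a F : path_mean mu k (fun gamma => a * F gamma) = a * path_mean mu k F.
Proof.
rewrite /path_mean mulr_sumr; apply: eq_bigr => xs _.
by rewrite mulr_sumr; apply: eq_bigr => gs _; rewrite mulrCA.
Qed.

Hypotheses (p_ge0 : forall i j, 0 <= p i j) (phi01 : forall j, 0 <= phi j <= 1).

Lemma chain_w_ge0 mu xs : (forall i, 0 <= mu i) -> 0 <= chain_w mu p xs.
Proof.
move=> mu_ge0; case: xs => [|x r] //=; rewrite mulr_ge0 //.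
by elim: r x => //= y r IHr x; rewrite mulr_ge0.
Qed.

Lemma drop_w_ge0 k (xs : k.-tuple 'I_B) gs : 0 <= drop_w phi xs gs.
Proof.
apply: prodr_ge0 => i _; have /andP [phi0 phi1] := phi01 (tnth xs i).
by case: (tnth gs i); rewrite ?subr_ge0.
Qed.

Lemma path_mean_le mu k F G : (forall i, 0 <= mu i) -> (forall gamma, F gamma <= G gamma) ->
  path_mean mu k F <= path_mean mu k G.
Proof.
move=> mu_ge0 FG; apply: ler_sum => xs _; apply: ler_sum => gs _.
by rewrite ler_wpM2l // mulr_ge0 ?chain_w_ge0 ?drop_w_ge0.
Qed.

End PathMean.

Section MarkovBound.
Variables (R : realType) (B : nat) (p : 'I_B -> 'I_B -> R) (phi : 'I_B -> R) (a b rho : R).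
Hypotheses (p_ge0 : forall i j, 0 <= p i j) (p_sum1 : forall i, \sum_j p i j = 1).
Hypotheses (phi01 : forall j, 0 <= phi j <= 1) (rho01 : 0 <= rho < 1).
Hypotheses (a_ge0 : 0 <= a) (b_ge0 : 0 <= b).
Hypothesis drop_contraction : forall i, a * (\sum_j p i j * (1 - phi j)) <= rho.

Lemma path_mean_bound_seq_chain k x v : 0 <= v ->
  path_mean p phi (p x) k (fun gamma => bound_seq a b v gamma k) <=
  rho ^+ k * (v - b / (1 - rho)) + b / (1 - rho).
Proof.
have [rho0 rho1] := andP rho01.
set M := b / (1 - rho).
have bM : b = M * (1 - rho) by rewrite divfK // subr_eq0 gt_eqF.
elim: k x v => [|k IHk] x v v0; first by rewrite path_mean0 expr0 mul1r subrK.
have mean_le beta y : path_mean p phi (p y) k (fun gamma => bound_seq a b v (scons beta gamma) k.+1)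
    <= rho ^+ k * (bound_step a b beta v - M) + M.
  apply: le_trans (IHk y _ (bound_step_ge0 _ a_ge0 b_ge0 v0)).
  by apply: path_mean_le => // gamma; rewrite bound_seq_scons.
set r := rho ^+ k; have r0 : 0 <= r by rewrite exprn_ge0.
rewrite path_meanS; apply: (@le_trans _ _
    (\sum_y p x y * (r * (b - M) + M + (1 - phi y) * (r * a * v)))).
  apply: ler_sum => y _; rewrite ler_wpM2l // big_bool /=.
  have [phi0 phi1] := andP (phi01 y).
  apply: le_trans (lerD (ler_wpM2l phi0 (mean_le true y)) (ler_wpM2l _ (mean_le false y))) _.
    by rewrite subr_ge0.
  by rewrite /bound_step /= -/r; lra.
under eq_bigr do rewrite mulrDr.
rewrite big_split /= -mulr_suml p_sum1 mul1r.
have -> : \sum_y p x y * ((1 - phi y) * (r * a * v)) = r * v * (a * \sum_y p x y * (1 - phi y)).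
  by rewrite !mulr_sumr; apply: eq_bigr => y _; ring.
apply: le_trans (lerD (lexx _) (ler_wpM2l _ (drop_contraction x))) _; first exact: mulr_ge0.
(* [r (b - M) = - rho r M] because [b = M (1 - rho)] *)
rewrite exprSr -/r; clearbody M; rewrite {}bM; lra.
Qed.

Lemma path_mean_bound_seq_chain_le k x u : 0 <= u ->
  path_mean p phi (p x) k (fun gamma => bound_seq a b u gamma k) <= u + b / (1 - rho).
Proof.
move=> u0; apply: le_trans (path_mean_bound_seq_chain _ _ u0) _.
have [rho0 rho1] := andP rho01.
have rku : rho ^+ k * u <= u by rewrite ler_piMl // ?exprn_ge0 ?exprn_ile1 // ltW.
have rkM : 0 <= rho ^+ k * (b / (1 - rho)).
  by rewrite mulr_ge0 ?exprn_ge0 // divr_ge0 // subr_ge0 ltW.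
rewrite mulrBr; lra.
Qed.

Lemma path_mean_bound_seq_le mu k v : (forall i, 0 <= mu i) -> \sum_i mu i = 1 -> 0 <= v ->
  path_mean p phi mu k (fun gamma => bound_seq a b v gamma k) <= v + (a * v + b) + b / (1 - rho).
Proof.
move=> mu_ge0 mu_sum1 v0; have [_ rho1] := andP rho01.
have M0 : 0 <= b / (1 - rho) by rewrite divr_ge0 // subr_ge0 ltW.
have av0 : 0 <= a * v by rewrite mulr_ge0.
case: k => [|k]; first by rewrite path_mean0 /= -addrA lerDl !addr_ge0.
apply: (@le_trans _ _ (a * v + b + b / (1 - rho))); last by rewrite lerD2r lerDr.
have mean_le x beta : path_mean p phi (p x) k
    (fun gamma => bound_seq a b v (scons beta gamma) k.+1) <= a * v + b + b / (1 - rho).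
  apply: le_trans (_ : path_mean p phi (p x) k
      (fun gamma => bound_seq a b (bound_step a b beta v) gamma k) <= _).
    by apply: path_mean_le => // gamma; rewrite bound_seq_scons.
  apply: le_trans (path_mean_bound_seq_chain_le _ _ (bound_step_ge0 _ a_ge0 b_ge0 v0)) _.
  by rewrite !lerD2r; case: beta.
rewrite path_meanS; apply: (@le_trans _ _ (\sum_x mu x * \sum_(beta : bool)
    (if beta then phi x else 1 - phi x) * (a * v + b + b / (1 - rho)))).
  apply: ler_sum => x _; rewrite ler_wpM2l //; apply: ler_sum => beta _.
  have [phi0 phi1] := andP (phi01 x).
  by rewrite ler_wpM2l ?mean_le //; case: beta; rewrite ?subr_ge0.
under eq_bigr do rewrite -mulr_suml big_bool /= subrKC mul1r.
by rewrite -mulr_suml mu_sum1 mul1r.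
Qed.

End MarkovBound.

Lemma exp_bounded_of_ub (R : realType) (E : nat -> R) beta : (forall k, E k <= beta) -> exp_bounded E.
Proof. by move=> Ebeta; exists 0, beta, 0; split=> [|k]; rewrite ?lexx ?ltr01 ?mul0r ?add0r. Qed.


Theorem corollary1 (R : realType) (n l1 B : nat)
  (A : 'M[R]_n) (C1 : 'M[R]_(l1, n))
  (Q : nat -> 'M[R]_n) (R1 : nat -> 'M[R]_l1) (P0 : 'M[R]_n)
  (pi0 : 'I_B -> R) (p : 'I_B -> 'I_B -> R) (phi : 'I_B -> R) (rho : R) :
  (* covariances *)
  psd P0 ->
  (forall k, psd (Q k)) ->
  (forall k, pd (R1 k)) ->
  (exists c : R, forall k, specnorm (Q k) <= c /\ specnorm (R1 k) <= c) ->
  (* initial distribution of the network state *)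
  (forall i, 0 <= pi0 i) -> \sum_i pi0 i = 1 ->
  (* time-homogeneous Markov chain transition probabilities *)
  (forall i j, 0 <= p i j) -> (forall i, \sum_j p i j = 1) ->
  (* success probabilities phi_{1|j} *)
  (forall j, 0 <= phi j <= 1) ->
  (* C1 has full column rank *)
  \rank C1 = n ->
  0 <= rho < 1 ->
  (forall i, specnorm A ^+ 2 * (\sum_j p i j * (1 - phi j)) <= rho) ->
  exp_bounded (exp_tr_P pi0 p phi A Q C1 R1 P0).
Proof.
move=> psdP0 psdQ pdR1 [c QR1c] pi0_ge0 pi0_sum1 p_ge0 p_sum1 phi01 rankC1 rho01 contraction.
have /row_fullP [L LC1] : row_full C1 by rewrite /row_full rankC1.
have c0 : 0 <= c := le_trans (specnorm_ge0 _) (QR1c 0).1.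
set a := specnorm A ^+ 2; set b := c * specnorm (A *m L) ^+ 2 + c; set v := specnorm P0.
have a0 : 0 <= a by exact: sqr_ge0.
have b0 : 0 <= b by rewrite /b addr_ge0 // mulr_ge0 ?sqr_ge0.
apply: (@exp_bounded_of_ub _ _ (n%:R * (v + (a * v + b) + b / (1 - rho)))) => k.
have -> : exp_tr_P pi0 p phi A Q C1 R1 P0 k =
    path_mean p phi pi0 k (fun gamma => \tr (kf_cov A Q C1 R1 P0 gamma k)) by [].
apply: (@le_trans _ _ (path_mean p phi pi0 k (fun gamma => n%:R * bound_seq a b v gamma k))).
  apply: path_mean_le => // gamma; apply: mxtrace_le_qform_ub.
  by apply: (kf_cov_bound A psdP0 psdQ pdR1 (fun k => (QR1c k).1) (fun k => (QR1c k).2) LC1 gamma k).2.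
rewrite (path_meanZl _ _ _ _ _ (fun gamma => bound_seq a b v gamma k)) ler_wpM2l //.
exact: path_mean_bound_seq_le (specnorm_ge0 _).
Qed.
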